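(* Let $\mathcal{C}_1,\mathcal{C}_2$ be symmetric monoidal anti-involutive categories and let $P_1$ be a monoidal positivity structure on $\mathcal{C}_1$. Let $\zeta\colon G_1\Rightarrow G_2$ be a monoidal anti-involutive natural isomorphism between symmetric monoidal anti-involutive functors $G_1,G_2\colon\mathcal{C}_1\to\mathcal{C}_2$. Then $G_1(P_1)=G_2(P_1)$ after taking closures under transfer.
   Context: Symmetric monoidal anti-involutive category $(\mathcal{C},d,\eta)$: symmetric monoidal category, symmetric monoidal functor $d\colon\mathcal{C}\to\mathcal{C}^{\mathrm{op}}$, monoidal natural isomorphism $\eta\colon\mathrm{id}\Rightarrow d^2$ with $d(\eta_x)\circ\eta_{dx}=\mathrm{id}$. A symmetric monoidal anti-involutive functor $(G,\phi)$: symmetric monoidal functor with monoidal natural isomorphism $\phi\colon G\circ d\Rightarrow d\circ G$ with $\phi_{dx}\circ G(\eta_x)=d(\phi_x)\circ\eta_{G(x)}$. An anti-involutive natural transformation $\zeta\colon(G_1,\phi_1)\Rightarrow(G_2,\phi_2)$ satisfies $(\phi_1)_x=d(\zeta_x)\circ(\phi_2)_x\circ\zeta_{dx}$. A Hermitian pairing is an isomorphism $h\colon c\to dc$ with $d(h)\circ\eta_c=h$. A (monoidal) positivity structure is a collection of Hermitian pairings $(c,h)$ surjecting onto objects of $\mathcal{C}$ (closed under tensor product $(c_1\otimes c_2,\chi\circ(h_1\otimes h_2))$, $\chi$ the monoidal structure of $d$). The transfer of $h$ along an isomorphism $g\colon c'\to c$ is $d(g)\circ h\circ g$; the closure of a collection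 is its closure under transfer. For $(G,\phi)$ and a collection $P$, $G(P)$ is the collection of Hermitian pairings $\phi_c\circ G(h)\colon G(c)\to dG(c)$ for $(c,h)\in P$. *)

Set Implicit Arguments.
Unset Strict Implicit.
Set Primitive Projections.

Record SMCData := {
  ob : Type;
  hom : ob -> ob -> Type;
  idm : forall x, hom x x;
  cmp : forall x y z, hom y z -> hom x y -> hom x z;   (* cmp g f = g o f *)
  tns : ob -> ob -> ob;
  tnsm : forall x x' y y', hom x x' -> hom y y' -> hom (tns x y) (tns x' y');
  unt : ob;
  asc : forall x y z, hom (tns (tns x y) z) (tns x (tns y z));
  asci : forall x y z, hom (tns x (tns y z)) (tns (tns x y) z);
  lun : forall x, hom (tns unt x) x;
  luni : forall x, hom x (tns unt x);
  run : forall x, hom (tns x unt) x;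
  runi : forall x, hom x (tns x unt);
  brd : forall x y, hom (tns x y) (tns y x)
}.

Arguments hom : clear implicits.
Arguments idm {s} x.
Arguments cmp {s x y z} g f.
Arguments tns {s} x y.
Arguments tnsm {s x x' y y'} f g.
Arguments unt {s}.
Arguments asc {s} x y z.
Arguments asci {s} x y z.
Arguments lun {s} x.
Arguments luni {s} x.
Arguments run {s} x.
Arguments runi {s} x.
Arguments brd {s} x y.

Notation "g ∘ f" := (cmp g f) (at level 40, left associativity).

Definition is_iso {C : SMCData} {x y : ob C} (f : hom C x y) : Prop :=
  exists g : hom C y x, g ∘ f = idm x /\ f ∘ g = idm y.

Record IsSMC (C : SMCData) : Prop := {
  cmp_assoc : forall (w x y z : ob C) (f : hom C w x) (g : hom C x y) (h : hom C y z),
      h ∘ (g ∘ f) = (h ∘ g) ∘ f;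
  cmp_id_l : forall (x y : ob C) (f : hom C x y), idm y ∘ f = f;
  cmp_id_r : forall (x y : ob C) (f : hom C x y), f ∘ idm x = f;
  tns_id : forall x y : ob C, tnsm (idm x) (idm y) = idm (tns x y);
  tns_cmp : forall (x x' x'' y y' y'' : ob C) (f : hom C x x') (g : hom C x' x'')
      (f' : hom C y y') (g' : hom C y' y''),
      tnsm (g ∘ f) (g' ∘ f') = tnsm g g' ∘ tnsm f f';
  asc_nat : forall (x x' y y' z z' : ob C) (f : hom C x x') (g : hom C y y') (h : hom C z z'),
      asc x' y' z' ∘ tnsm (tnsm f g) h = tnsm f (tnsm g h) ∘ asc x y z;
  asc_iso1 : forall x y z : ob C, asci x y z ∘ asc x y z = idm _;
  asc_iso2 : forall x y z : ob C, asc x y z ∘ asci x y z = idm _;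
  lun_nat : forall (x y : ob C) (f : hom C x y), lun y ∘ tnsm (idm unt) f = f ∘ lun x;
  lun_iso1 : forall x : ob C, luni x ∘ lun x = idm _;
  lun_iso2 : forall x : ob C, lun x ∘ luni x = idm _;
  run_nat : forall (x y : ob C) (f : hom C x y), run y ∘ tnsm f (idm unt) = f ∘ run x;
  run_iso1 : forall x : ob C, runi x ∘ run x = idm _;
  run_iso2 : forall x : ob C, run x ∘ runi x = idm _;
  pentagon : forall w x y z : ob C,
      asc w x (tns y z) ∘ asc (tns w x) y z
      = tnsm (idm w) (asc x y z) ∘ asc w (tns x y) z ∘ tnsm (asc w x y) (idm z);
  triangle : forall x y : ob C,
      tnsm (idm x) (lun y) ∘ asc x unt y = tnsm (run x) (idm y);
  brd_nat : forall (x x' y y' : ob C) (f : hom C x x') (g : hom C y y'),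
      brd x' y' ∘ tnsm f g = tnsm g f ∘ brd x y;
  hexagon : forall x y z : ob C,
      asc y z x ∘ brd x (tns y z) ∘ asc x y z
      = tnsm (idm y) (brd x z) ∘ asc y x z ∘ tnsm (brd x y) (idm z);
  brd_sym : forall x y : ob C, brd y x ∘ brd x y = idm _
}.

Definition op (C : SMCData) : SMCData := {|
  ob := ob C;
  hom x y := hom C y x;
  idm x := @idm C x;
  cmp x y z g f := @cmp C z y x f g;
  tns := @tns C;
  tnsm x x' y y' f g := @tnsm C x' x y' y f g;
  unt := @unt C;
  asc x y z := @asci C x y z;
  asci x y z := @asc C x y z;
  lun x := @luni C x;
  luni x := @lun C x;
  run x := @runi C x;
  runi x := @run C x;
  brd x y := @brd C y x
|}.

Record FuncData (C D : SMCData) := {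
  fo : ob C -> ob D;
  fm : forall x y, hom C x y -> hom D (fo x) (fo y);
  fmu : forall x y, hom D (tns (fo x) (fo y)) (fo (tns x y));
  fmui : forall x y, hom D (fo (tns x y)) (tns (fo x) (fo y));
  feps : hom D unt (fo unt);
  fepsi : hom D (fo unt) unt
}.
Arguments fo {C D} f x.
Arguments fm {C D} f {x y} f.
Arguments fmu {C D} f x y.
Arguments fmui {C D} f x y.
Arguments feps {C D} f.
Arguments fepsi {C D} f.

Record IsSMFunctor (C D : SMCData) (F : FuncData C D) : Prop := {
  fm_id : forall x : ob C, fm F (idm x) = idm (fo F x);
  fm_cmp : forall (x y z : ob C) (f : hom C x y) (g : hom C y z),
      fm F (g ∘ f) = fm F g ∘ fm F f;
  fmu_nat : forall (x x' y y' : ob C) (f : hom C x x') (g : hom C y y'),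
      fmu F x' y' ∘ tnsm (fm F f) (fm F g) = fm F (tnsm f g) ∘ fmu F x y;
  fmu_iso1 : forall x y : ob C, fmui F x y ∘ fmu F x y = idm _;
  fmu_iso2 : forall x y : ob C, fmu F x y ∘ fmui F x y = idm _;
  feps_iso1 : fepsi F ∘ feps F = idm _;
  feps_iso2 : feps F ∘ fepsi F = idm _;
  fmu_assoc : forall x y z : ob C,
      fm F (asc x y z) ∘ fmu F (tns x y) z ∘ tnsm (fmu F x y) (idm (fo F z))
      = fmu F x (tns y z) ∘ tnsm (idm (fo F x)) (fmu F y z)
        ∘ asc (fo F x) (fo F y) (fo F z);
  fmu_lun : forall x : ob C,
      fm F (lun x) ∘ fmu F unt x ∘ tnsm (feps F) (idm (fo F x)) = lun (fo F x);
  fmu_run : forall x : ob C,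
      fm F (run x) ∘ fmu F x unt ∘ tnsm (idm (fo F x)) (feps F) = run (fo F x);
  fmu_brd : forall x y : ob C,
      fm F (brd x y) ∘ fmu F x y = fmu F y x ∘ brd (fo F x) (fo F y)
}.

Definition fid (C : SMCData) : FuncData C C := {|
  fo x := x;
  fm x y f := f;
  fmu x y := idm (tns x y);
  fmui x y := idm (tns x y);
  feps := idm unt;
  fepsi := idm unt
|}.

Definition fcomp (C D E : SMCData) (G : FuncData D E) (F : FuncData C D)
  : FuncData C E := {|
  fo x := fo G (fo F x);
  fm x y f := fm G (fm F f);
  fmu x y := fm G (fmu F x y) ∘ fmu G (fo F x) (fo F y);
  fmui x y := fmui G (fo F x) (fo F y) ∘ fm G (fmui F x y);
  feps := fm G (feps F) ∘ feps G;
  fepsi := fepsi G ∘ fm G (fepsi F)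
|}.

Definition fop (C D : SMCData) (F : FuncData C D) : FuncData (op C) (op D) :=
  @Build_FuncData (op C) (op D)
    (fo F)
    (fun (x y : ob (op C)) (f : hom (op C) x y) => @fm C D F y x f)
    (fun x y => fmui F x y)
    (fun x y => fmu F x y)
    (fepsi F)
    (feps F).

Record IsMonNatIso (C D : SMCData) (F G : FuncData C D)
    (theta : forall x : ob C, hom D (fo F x) (fo G x)) : Prop := {
  nt_nat : forall (x y : ob C) (f : hom C x y), theta y ∘ fm F f = fm G f ∘ theta x;
  nt_mon : forall x y : ob C,
      theta (tns x y) ∘ fmu F x y = fmu G x y ∘ tnsm (theta x) (theta y);
  nt_unit : theta unt ∘ feps F = feps G;
  nt_iso : forall x : ob C, is_iso (theta x)
}.

Arguments IsMonNatIso {C D} F G theta.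

Record AICat := {
  ac : SMCData;
  dual : FuncData ac (op ac);
  eta : forall x : ob ac, hom ac x (fo dual (fo dual x))
}.

Arguments dual : clear implicits.
Arguments eta : clear implicits.

(* d^2 = d^op o d : C -> (C^op)^op = C *)
Definition dd (A : AICat) : FuncData (ac A) (ac A) := fcomp (fop (dual A)) (dual A).

Record IsAICat (A : AICat) : Prop := {
  aic_smc : IsSMC (ac A);
  aic_d : IsSMFunctor (dual A);
  aic_eta : IsMonNatIso (fid (ac A)) (dd A) (eta A);
  aic_eta_d : forall x : ob (ac A),
      @cmp (ac A) _ _ _ (fm (dual A) (eta A x)) (eta A (fo (dual A) x)) = idm _
}.

Record AIFunc (A B : AICat) := {
  af : FuncData (ac A) (ac B);
  aphi : forall x : ob (ac A),
      hom (ac B) (fo af (fo (dual A) x)) (fo (dual B) (fo af x))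
}.
Arguments af {A B} a.
Arguments aphi {A B} a x.

(* phi is a monoidal natural iso between the contravariant functors
   G o d and d o G; as functors C1 -> C2^op, its C2-components
   G(d x) -> d(G x) form a natural transformation d o G => G^op o d. *)
Record IsAIFunc (A B : AICat) (G : AIFunc A B) : Prop := {
  aif_sm : IsSMFunctor (af G);
  aif_phi : IsMonNatIso (fcomp (dual B) (af G)) (fcomp (fop (af G)) (dual A)) (aphi G);
  aif_coh : forall x : ob (ac A),
      @cmp (ac B) _ _ _ (aphi G (fo (dual A) x)) (fm (af G) (eta A x))
      = @cmp (ac B) _ _ _ (fm (dual B) (aphi G x)) (eta B (fo (af G) x))
}.

Record IsMonAINatIso (A B : AICat) (G1 G2 : AIFunc A B)
    (zeta : forall x : ob (ac A), hom (ac B) (fo (af G1) x) (fo (af G2) x)) : Prop := {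
  ain_mon : IsMonNatIso (af G1) (af G2) zeta;
  ain_coh : forall x : ob (ac A),
      aphi G1 x
      = @cmp (ac B) _ _ _ (@cmp (ac B) _ _ _ (fm (dual B) (zeta x)) (aphi G2 x))
          (zeta (fo (dual A) x))
}.

Arguments IsMonAINatIso {A B} G1 G2 zeta.

Definition HP (A : AICat) : Type := { c : ob (ac A) & hom (ac A) c (fo (dual A) c) }.

Definition is_herm (A : AICat) (p : HP A) : Prop :=
  is_iso (projT2 p) /\
  @cmp (ac A) _ _ _ (fm (dual A) (projT2 p)) (eta A (projT1 p)) = projT2 p.

(* tensor product of pairings: (c1 (x) c2, chi o (h1 (x) h2)), chi the
   monoidal structure d c1 (x) d c2 -> d (c1 (x) c2) of d *)
Definition herm_tns (A : AICat) (p q : HP A) : HP A :=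
  existT _ (tns (projT1 p) (projT1 q))
    (@cmp (ac A) _ _ _ (fmui (dual A) (projT1 p) (projT1 q))
       (tnsm (projT2 p) (projT2 q))).

Record IsMonPosStruct (A : AICat) (P : HP A -> Prop) : Prop := {
  ps_herm : forall p, P p -> is_herm p;
  ps_surj : forall c : ob (ac A), exists h, P (existT _ c h);
  ps_tns : forall p q, P p -> P q -> P (herm_tns p q)
}.

Definition transfer (A : AICat) (c c' : ob (ac A)) (h : hom (ac A) c (fo (dual A) c))
  (g : hom (ac A) c' c) : HP A :=
  existT _ c' (@cmp (ac A) _ _ _ (@cmp (ac A) _ _ _ (fm (dual A) g) h) g).

Inductive closure (A : AICat) (P : HP A -> Prop) : HP A -> Prop :=
| cl_base : forall p, P p -> closure P p
| cl_transfer : forall (c c' : ob (ac A)) (h : hom (ac A) c (fo (dual A) c))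
    (g : hom (ac A) c' c),
    closure P (existT _ c h) -> is_iso g -> closure P (transfer h g).

Definition img (A B : AICat) (G : AIFunc A B) (P : HP A -> Prop) : HP B -> Prop :=
  fun p' => exists (c : ob (ac A)) (h : hom (ac A) c (fo (dual A) c)),
    P (existT _ c h) /\
    p' = existT (fun c' => hom (ac B) c' (fo (dual B) c')) (fo (af G) c)
           (@cmp (ac B) _ _ _ (aphi G c) (fm (af G) h)).


Set Implicit Arguments.
Unset Strict Implicit.

(* Transferring the [G2]-image [phi2_c o G2(h)] of a pairing along [zeta_c]
   gives its [G1]-image [phi1_c o G1(h)], by naturality of [zeta] and the
   coherence [phi1_c = d(zeta_c) o phi2_c o zeta_(dc)]. Since transfer along
   [g] is undone by transfer along [g^-1], the two images generate the same
   transfer-closed collection. *)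

Lemma closure_minimal (A : AICat) (P Q : HP A -> Prop) :
  (forall p, P p -> closure Q p) -> forall p, closure P p -> closure Q p.
Proof.
  intros PQ p Pp; induction Pp as [p Pp | c c' h g _ IH g_iso].
  - now apply PQ.
  - now apply cl_transfer.
Qed.

Section Transfer.

Variable A : AICat.
Hypothesis A_smc : IsSMC (ac A).
Hypothesis d_sm : IsSMFunctor (dual A).

Local Notation "g ⊙ f" := (@cmp (ac A) _ _ _ g f) (at level 40, left associativity).

Lemma transfer_id (c : ob (ac A)) (h : hom (ac A) c (fo (dual A) c)) :
  transfer h (idm c) = existT _ c h.
Proof.
  unfold transfer; f_equal.
  rewrite (cmp_id_r A_smc), (fm_id d_sm); exact (cmp_id_l A_smc h).
Qed.

Lemma transfer_cmp (c c' c'' : ob (ac A)) (h : hom (ac A) c (fo (dual A) c))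
    (g : hom (ac A) c' c) (g' : hom (ac A) c'' c') :
  transfer (projT2 (transfer h g)) g' = transfer h (g ⊙ g').
Proof.
  unfold transfer; simpl; f_equal.
  rewrite (fm_cmp d_sm), !(cmp_assoc A_smc); reflexivity.
Qed.

Lemma transfer_cancel (c c' : ob (ac A)) (h : hom (ac A) c (fo (dual A) c))
    (g : hom (ac A) c' c) (g' : hom (ac A) c c') :
  g ⊙ g' = idm c -> transfer (projT2 (transfer h g)) g' = existT _ c h.
Proof. intros gg'; rewrite transfer_cmp, gg'; apply transfer_id. Qed.

End Transfer.

Definition image_pairing {A B : AICat} (G : AIFunc A B) (c : ob (ac A))
    (h : hom (ac A) c (fo (dual A) c)) : HP B :=
  existT _ (fo (af G) c) (@cmp (ac B) _ _ _ (aphi G c) (fm (af G) h)).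

Lemma img_sub_closure (A B : AICat) (P : HP A -> Prop) (G G' : AIFunc A B) :
  (forall c h, exists g : hom (ac B) (fo (af G) c) (fo (af G') c), is_iso g /\
     image_pairing G h = transfer (projT2 (image_pairing G' h)) g) ->
  forall p, img G P p -> closure (img G' P) p.
Proof.
  intros G_transfer p [c [h [Pch ->]]].
  change (closure (img G' P) (image_pairing G h)).
  destruct (G_transfer c h) as [g [g_iso ->]].
  apply cl_transfer; [apply cl_base; now exists c, h | exact g_iso].
Qed.

Section NatIsoImage.

Variables A1 A2 : AICat.
Hypothesis A2_smc : IsSMC (ac A2).
Variables G1 G2 : AIFunc A1 A2.
Variable zeta : forall x : ob (ac A1), hom (ac A2) (fo (af G1) x) (fo (af G2) x).
Hypothesis zeta_ai : IsMonAINatIso G1 G2 zeta.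

Local Notation "g ⊙ f" := (@cmp (ac A2) _ _ _ g f) (at level 40, left associativity).

Lemma image_pairing_hom_transfer (c : ob (ac A1)) (h : hom (ac A1) c (fo (dual A1) c)) :
  aphi G1 c ⊙ fm (af G1) h
  = fm (dual A2) (zeta c) ⊙ (aphi G2 c ⊙ fm (af G2) h) ⊙ zeta c.
Proof.
  rewrite (ain_coh zeta_ai c), <- (cmp_assoc A2_smc), (nt_nat (ain_mon zeta_ai)).
  rewrite !(cmp_assoc A2_smc); reflexivity.
Qed.

Lemma image_pairing_transfer (c : ob (ac A1)) (h : hom (ac A1) c (fo (dual A1) c)) :
  image_pairing G1 h = transfer (projT2 (image_pairing G2 h)) (zeta c).
Proof. unfold image_pairing, transfer; f_equal; apply image_pairing_hom_transfer. Qed.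

Lemma image_pairing_transfer_inv (A2_d : IsSMFunctor (dual A2))
    (c : ob (ac A1)) (h : hom (ac A1) c (fo (dual A1) c))
    (zeta_inv : hom (ac A2) (fo (af G2) c) (fo (af G1) c)) :
  zeta c ⊙ zeta_inv = idm _ ->
  image_pairing G2 h = transfer (projT2 (image_pairing G1 h)) zeta_inv.
Proof.
  intros zeta_right_inv.
  transitivity (transfer (fm (dual A2) (zeta c) ⊙ (aphi G2 c ⊙ fm (af G2) h) ⊙ zeta c)
                         zeta_inv).
  - symmetry; exact (transfer_cancel A2_smc A2_d _ zeta_right_inv).
  - rewrite <- image_pairing_hom_transfer; reflexivity.
Qed.

End NatIsoImage.

Theorem mainTheorem14 (A1 A2 : AICat) (HA1 : IsAICat A1) (HA2 : IsAICat A2)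
  (P1 : HP A1 -> Prop) (HP1 : IsMonPosStruct P1)
  (G1 G2 : AIFunc A1 A2) (HG1 : IsAIFunc G1) (HG2 : IsAIFunc G2)
  (zeta : forall x : ob (ac A1), hom (ac A2) (fo (af G1) x) (fo (af G2) x))
  (Hzeta : IsMonAINatIso G1 G2 zeta) :
  forall p : HP A2, closure (img G1 P1) p <-> closure (img G2 P1) p.
Proof.
  destruct HA2 as [A2_smc A2_d _ _].
  intro p; split; apply closure_minimal, img_sub_closure; intros c h.
  - exists (zeta c); split.
    + exact (nt_iso (ain_mon Hzeta) c).
    + exact (image_pairing_transfer A2_smc Hzeta h).
  - destruct (nt_iso (ain_mon Hzeta) c) as [zeta_inv [zeta_left_inv zeta_right_inv]].
    exists zeta_inv; split.
    + now exists (zeta c).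
    + exact (image_pairing_transfer_inv A2_smc Hzeta A2_d h zeta_right_inv).
Qed.
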